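(* Let $\Gamma$ be a $C^2$ curve with arc-length parametrization $\boldsymbol X(s)$ satisfying $\boldsymbol X(0)=\boldsymbol 0$ and $\partial_s\boldsymbol X(0)=(1,0)^T$, with unit normal field $\boldsymbol n$, and fix $\lambda\ge0$. For $R>0$ let $\mathcal O$ be the disc of radius $R$ centered at $\boldsymbol 0$ and choose collocation points $\boldsymbol q^{(1)}_k=\boldsymbol X(\eta^{(1)}_kR)$, $k=1,2,3$, with $\eta^{(1)}_k$ distinct; $\boldsymbol q^{(2)}_k=\boldsymbol X(\eta^{(2)}_kR)$, $k=1,2$, with $\eta^{(2)}_1\neq\eta^{(2)}_2$; $\boldsymbol q^{(3)}=\boldsymbol X(\eta^{(3)}R)$; and $\boldsymbol q^{(4)}_k=R\boldsymbol\xi_k$, $k=1,2,3$, with $\boldsymbol\xi_1,\boldsymbol\xi_2,\boldsymbol\xi_3$ non-collinear, where all constants $\eta^{(d)}_k,\boldsymbol\xi_k$ are independent of $R$ and all points lie in $\mathcal O$. Then there exists $R_0>0$ such that for all $R\le R_0$ the $15\times15$ collocation matrix $\boldsymbol M=\boldsymbol M(R)$ defined in the context is invertible and $\|\boldsymbol M^{-1}\|_\infty$ is bounded uniformly in $R\in(0,R_0]$.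
   Context: Let $\phi_1=1,\phi_2=x,\phi_3=y,\phi_4=x^2,\phi_5=y^2,\phi_6=xy$. Unknowns are $\boldsymbol c_1,\dots,\boldsymbol c_6\in\mathbb R^2$ (components $c_j^{(1)},c_j^{(2)}$) and $d_1,d_2,d_3\in\mathbb R$, i.e. a vector in $\mathbb R^{15}$, representing $\hat{\boldsymbol v}(\boldsymbol x)=\sum_{j=1}^6\boldsymbol c_j\phi_j(\boldsymbol x/R)$, $\hat q(\boldsymbol x)=\sum_{j=1}^3\frac{d_j}{R}\phi_j(\boldsymbol x/R)$. The matrix $\boldsymbol M$ is the matrix of the linear map sending the unknowns to the 15 quantities: (i) for $k=1,2,3$: $\sum_{j=1}^6\phi_j(\boldsymbol q^{(1)}_k/R)\boldsymbol c_j\in\mathbb R^2$; (ii) for $k=1,2$: $\sum_{j=1}^6\big(\boldsymbol c_j\nabla\phi_j^T+\nabla\phi_j\boldsymbol c_j^T\big)(\boldsymbol q^{(2)}_k/R)\,\boldsymbol n(\boldsymbol q^{(2)}_k)-\sum_{j=1}^3d_j\phi_j(\boldsymbol q^{(2)}_k/R)\boldsymbol n(\boldsymbol q^{(2)}_k)\in\mathbb R^2$; (iii) $\sum_{j=1}^6\big((\Delta-\lambda)\phi_j\big)(\boldsymbol q^{(3)}/R)\,\boldsymbol c_j-\sum_{j=1}^3\nabla\phi_j(\boldsymbol q^{(3)}/R)\,d_j\in\mathbb R^2$; (iv) for $k=1,2,3$: $\sum_{j=1}^6\big(\partial_x\phi_j\,c_j^{(1)}+\partial_y\phi_j\,c_j^{(2)}\big)(\boldsymbol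 q^{(4)}_k/R)\in\mathbb R$ (with a fixed ordering of rows and columns). $\|\cdot\|_\infty$ is the maximum-row-sum matrix norm. These encode collocation of the Dirichlet condition, traction condition, Brinkman momentum equation and divergence-free condition for a local Cauchy problem on $\Gamma\cap\mathcal O$. *)

From mathcomp Require Import all_boot all_order all_algebra.
From mathcomp Require Import all_classical all_reals all_analysis.
Import Order.TTheory GRing.Theory Num.Theory.
Import numFieldNormedType.Exports.
Local Open Scope ring_scope.

Section CollocDefs.
Variable R : realType.

(* phi j, j = 0..5, stands for phi_{j+1} in the paper:
   1, x, y, x^2, y^2, xy *)
Definition phi (j : nat) (x y : R) : R :=
  match j with
  | 0 => 1 | 1 => x | 2 => y | 3 => x ^+ 2 | 4 => y ^+ 2 | _ => x * y
  end.

Definition dphi (a j : nat) (x y : R) : R :=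
  match j with
  | 0 => 0
  | 1 => if a == 0%N then 1 else 0
  | 2 => if a == 0%N then 0 else 1
  | 3 => if a == 0%N then 2 * x else 0
  | 4 => if a == 0%N then 0 else 2 * y
  | _ => if a == 0%N then y else x
  end.

Definition lapphi (j : nat) : R :=
  match j with 3 | 4 => 2 | _ => 0 end.

Definition comp (a : nat) (p : R * R) : R := if a == 0%N then p.1 else p.2.

(* Columns u = 0..11 : c_{j+1}^{(b+1)} with j = u/2, b = u mod 2;
   columns u = 12..14 : d_{u-11}.
   Rows r = 0..5   : (i)   Dirichlet at q1_(r/2), component r mod 2;
   rows r = 6..9   : (ii)  traction at q2_((r-6)/2), component r mod 2;
   rows r = 10..11 : (iii) Brinkman momentum at q3, component r-10;
   rows r = 12..14 : (iv)  divergence at q4_(r-12).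
   nv k is the unit normal n(q2_k); Rad is the radius R. *)
Definition collocM (lam Rad : R) (q1 : 'I_3 -> R * R) (q2 nv : 'I_2 -> R * R)
    (q3 : R * R) (q4 : 'I_3 -> R * R) : 'M[R]_15 :=
  \matrix_(r < 15, u < 15)
   (let sc (p : R * R) := (p.1 / Rad, p.2 / Rad) in
    if (u < 12)%N then
      let j := (u %/ 2)%N in let b := (u %% 2)%N in
      if (r < 6)%N then
        let p := sc (q1 (inord (r %/ 2))) in let a := (r %% 2)%N in
        (a == b)%:R * phi j p.1 p.2
      else if (r < 10)%N then
        let k : 'I_2 := inord ((r - 6) %/ 2) in
        let p := sc (q2 k) in let n := nv k in let a := (r %% 2)%N in
        (a == b)%:R * (dphi 0 j p.1 p.2 * n.1 + dphi 1 j p.1 p.2 * n.2)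
        + dphi a j p.1 p.2 * comp b n
      else if (r < 12)%N then
        let p := sc q3 in let a := (r - 10)%N in
        (a == b)%:R * (lapphi j - lam * phi j p.1 p.2)
      else
        let p := sc (q4 (inord (r - 12))) in dphi b j p.1 p.2
    else
      let j := (u - 12)%N in
      if (r < 6)%N then 0
      else if (r < 10)%N then
        let k : 'I_2 := inord ((r - 6) %/ 2) in
        let p := sc (q2 k) in let n := nv k in let a := (r %% 2)%N in
        - (phi j p.1 p.2 * comp a n)
      else if (r < 12)%N then
        let p := sc q3 in let a := (r - 10)%N in
        - dphi a j p.1 p.2
      else 0).

Definition mxinfnorm (m n : nat) (A : 'M[R]_(m, n)) : R :=
  \big[Num.max/0]_(i < m) \sum_(j < n) `|A i j|.

End CollocDefs.

Arguments collocM {R}.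
Arguments mxinfnorm {R m n}.

(* The entries of M(R) only involve the collocation points divided by R.  As R -> 0
   these rescaled points converge to points (eta, 0) of the tangent line of Gamma at 0
   (resp. to the xi_k), and the normals converge to n(0) = (0, n2(0)), so M(R) converges
   entrywise to a fixed matrix M0.  M0 is invertible: on its kernel the Dirichlet rows
   give polynomials of degree 2 vanishing at three distinct points, the traction rows
   affine functions vanishing at two distinct points, and the divergence rows an affine
   function of the plane vanishing at three non-collinear points.  Since det and adj are
   polynomial in the entries, M(R)^-1 -> M0^-1, which bounds ||M(R)^-1|| for small R. *)

From Pilot Require Import Defs.
From mathcomp Require Import all_boot all_order all_algebra.
From mathcomp Require Import all_classical all_reals all_analysis.
From mathcomp Require Import ring.
Import Order.TTheory GRing.Theory Num.Theory.
Import numFieldNormedType.Exports.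
Local Open Scope classical_set_scope.
Local Open Scope ring_scope.

Section MatrixLimit.
Context {R : realType} {T : Type} {F : set_system T} {FF : Filter F}.

Lemma cvg_det {n} {G : T -> 'M[R]_n} {L : 'M[R]_n} :
  (forall i j, G x i j @[x --> F] --> L i j) -> \det (G x) @[x --> F] --> \det L.
Proof.
move=> GL; apply: cvg_big => [|s _]; first exact: add_continuous.
apply: cvgMl_tmp; apply: cvg_big => [|i _]; [exact: mul_continuous | exact: GL].
Qed.

Lemma cvg_adj {n} {G : T -> 'M[R]_n} {L : 'M[R]_n} :
  (forall i j, G x i j @[x --> F] --> L i j) ->
  forall i j, \adj (G x) i j @[x --> F] --> \adj L i j.
Proof.
move=> GL i j; rewrite [X in _ --> X]mxE; under eq_cvg do rewrite mxE.
apply: cvgMl_tmp; apply: cvg_det => k l; rewrite !mxE; under eq_cvg do rewrite !mxE.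
exact: GL.
Qed.

Lemma mxinfnorm_le_sum {m n} (A : 'M[R]_(m, n)) : mxinfnorm A <= \sum_i \sum_j `|A i j|.
Proof.
have sum_ge0 i : 0 <= \sum_j `|A i j| by apply: sumr_ge0.
apply: bigmax_le => [|i _]; first exact: sumr_ge0.
by rewrite (bigD1 i) //= lerDl; apply: sumr_ge0.
Qed.

Lemma cvg_unitmx_invmx_bounded {n} {G : T -> 'M[R]_n} {L : 'M[R]_n} :
  (forall i j, G x i j @[x --> F] --> L i j) -> L \in unitmx ->
  exists C : R, \forall x \near F, G x \in unitmx /\ mxinfnorm (invmx (G x)) <= C.
Proof.
move=> GL unitL; have detL : \det L != 0 by rewrite -unitfE -unitmxE.
have cvg_detG := cvg_det GL.
have near_unitG : \forall x \near F, G x \in unitmx.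
  near=> x; rewrite unitmxE unitfE; near: x; exact: cvgr_neq0 cvg_detG detL.
pose S := \sum_i \sum_j `|invmx L i j|.
have cvg_invG i j : invmx (G x) i j @[x --> F] --> invmx L i j.
  have -> : invmx L i j = (\det L)^-1 * \adj L i j by rewrite /invmx unitL mxE.
  apply: cvg_trans (cvgM (cvgV detL cvg_detG) (cvg_adj GL i j)).
  apply: near_eq_cvg; near=> x.
  by rewrite /invmx ifT; [rewrite mxE | near: x].
have cvg_sum : \sum_i \sum_j `|invmx (G x) i j| @[x --> F] --> S.
  apply: cvg_big => [|i _]; first exact: add_continuous.
  apply: cvg_big => [|j _]; first exact: add_continuous.
  exact: cvg_norm (cvg_invG i j).
exists (S + 1); near=> x; split; first by near: x.
apply: le_trans (mxinfnorm_le_sum _) _; apply: ltW; near: x.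
by apply: cvgr_lt cvg_sum _ _; rewrite ltrDl.
Unshelve. all: by end_near. Qed.

End MatrixLimit.

Lemma near_dnbhs0_pos {R : realType} {P : R -> Prop} :
  (\forall t \near 0^', P t) -> exists2 R0 : R, 0 < R0 & forall t, 0 < t <= R0 -> P t.
Proof.
move=> /nbhs_ballP[e /= e0 Pe]; exists (e / 2) => [|t /andP[t0 te]]; first by rewrite divr_gt0.
apply: Pe; last exact: lt0r_neq0.
rewrite -ball_normE /= sub0r normrN gtr0_norm //.
by apply: le_lt_trans te _; rewrite ltr_pdivrMr // ltr_pMr // ltr1n.
Qed.

Lemma unitmx_of_ker0 (R : fieldType) n (A : 'M[R]_n.+1) :
  (forall w : nat -> R, (forall i : 'I_n.+1, \sum_(0 <= k < n.+1) A i (inord k) * w k = 0) ->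
     forall k, (k <= n)%N -> w k = 0) ->
  A \in unitmx.
Proof.
move=> ker0; rewrite -unitmx_tr -row_free_unit -kermx_eq0 -submx0.
apply/rV_subP => v /sub_kermxP vA; rewrite submx0; apply/eqP/rowP => j.
rewrite mxE -[j in v 0 j]inord_val; apply: (ker0 (fun k => v 0 (inord k))); last first.
  by rewrite -ltnS ltn_ord.
move=> i; have := congr1 (fun M : 'rV_n.+1 => M 0 i) vA; rewrite !mxE => vAi.
rewrite -[RHS]vAi big_mkord; apply: eq_bigr => k _.
by rewrite inord_val mxE mulrC.
Qed.

Section VanishingPolynomials.
Context {R : idomainType}.

Lemma affine_eq0_at2 {a b x y : R} : a != b ->
  x + y * a = 0 -> x + y * b = 0 -> x = 0 /\ y = 0.
Proof.
move=> ab xa xb; have y0 : y = 0.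
  apply: (mulIf (_ : a - b != 0)); first by rewrite subr_eq0.
  have -> : y * (a - b) = (x + y * a) - (x + y * b) by ring.
  by rewrite xa xb subrr mul0r.
by split=> //; move: xa; rewrite y0 mul0r addr0.
Qed.

Lemma quadratic_eq0_at3 {a b c x y z : R} : a != b -> a != c -> b != c ->
  x + y * a + z * a ^+ 2 = 0 -> x + y * b + z * b ^+ 2 = 0 -> x + y * c + z * c ^+ 2 = 0 ->
  [/\ x = 0, y = 0 & z = 0].
Proof.
move=> ab ac bc xa xb xc.
have slope u v : u != v -> x + y * u + z * u ^+ 2 = 0 -> x + y * v + z * v ^+ 2 = 0 ->
    (y + z * u) + z * v = 0.
  move=> uv xu xv; apply: (mulIf (_ : u - v != 0)); first by rewrite subr_eq0.
  have -> : (y + z * u + z * v) * (u - v) =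
    (x + y * u + z * u ^+ 2) - (x + y * v + z * v ^+ 2) by ring.
  by rewrite xu xv subrr mul0r.
have [yz0 z0] := affine_eq0_at2 bc (slope a b ab xa xb) (slope a c ac xa xc).
have y0 : y = 0 by move: yz0; rewrite z0 mul0r addr0.
by split=> //; move: xa; rewrite y0 z0 !mul0r !addr0.
Qed.

Lemma affine2_eq0_at3 {x0 y0 x1 y1 x2 y2 a b c : R} :
  (x1 - x0) * (y2 - y0) - (y1 - y0) * (x2 - x0) != 0 ->
  a + b * x0 + c * y0 = 0 -> a + b * x1 + c * y1 = 0 -> a + b * x2 + c * y2 = 0 ->
  [/\ a = 0, b = 0 & c = 0].
Proof.
set D := _ - _ => D0 h0 h1 h2.
have b0 : b = 0.
  apply: (mulIf D0); have -> : b * D =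
    (y2 - y0) * ((a + b * x1 + c * y1) - (a + b * x0 + c * y0))
    - (y1 - y0) * ((a + b * x2 + c * y2) - (a + b * x0 + c * y0)) by rewrite /D; ring.
  by rewrite h0 h1 h2 subrr !mulr0 subrr mul0r.
have c0 : c = 0.
  apply: (mulIf D0); have -> : c * D =
    (x1 - x0) * ((a + b * x2 + c * y2) - (a + b * x0 + c * y0))
    - (x2 - x0) * ((a + b * x1 + c * y1) - (a + b * x0 + c * y0)) by rewrite /D; ring.
  by rewrite h0 h1 h2 subrr !mulr0 subrr mul0r.
by split=> //; move: h0; rewrite b0 c0 !mul0r !addr0.
Qed.

End VanishingPolynomials.

Section ScaledLimits.
Context {R : realType}.

Lemma cvg_scale_dnbhs0 {e : R} : e != 0 -> (fun t => e * t) @ 0^' --> (0 : R)^'.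
Proof.
move=> e0 P /nbhs_ballP[d /= d0 Pd]; apply/nbhs_ballP.
exists (d / `|e|) => /= [|t]; first by rewrite divr_gt0 // normr_gt0.
rewrite -!ball_normE /= !sub0r !normrN => te t0; apply: Pd; last by rewrite mulf_neq0.
by rewrite -ball_normE /= sub0r normrN normrM mulrC -ltr_pdivlMr // normr_gt0.
Qed.

Lemma cvg_comp_scale_div {f : R -> R} (e : R) : derivable f 0 1 -> f 0 = 0 ->
  f (e * t) / t @[t --> 0^'] --> e * derive1 f 0.
Proof.
move=> df f0; have [->|e0] := eqVneq e 0.
  by rewrite mul0r; under eq_cvg do rewrite mul0r f0 mul0r; exact: cvg_cst.
have Df : (fun h => h^-1 *: ((f \o shift 0) (h *: 1) - f 0)) @ 0^' --> derive1 f 0.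
  by rewrite derive1E; exact: df.
apply: cvg_trans (cvgMl_tmp (a := e) (cvg_comp _ _ (cvg_scale_dnbhs0 e0) Df)).
apply: near_eq_cvg; near=> t.
have t0 : t != 0 by near: t; exact: nbhs_dnbhs_neq.
rewrite /= f0 subr0 addr0 /GRing.scale /= mulr1 invfM.
by rewrite mulrA mulrA mulfV // mul1r mulrC.
Unshelve. all: by end_near. Qed.

Lemma cvg_comp_scale {f : R -> R} {e : R} : {for 0, continuous f} ->
  f (e * t) @[t --> 0^'] --> f 0.
Proof.
move=> cf; have et0 : e * t @[t --> 0^'] --> e * 0 by apply: cvgMl_tmp; exact: nbhs_dnbhs.
by rewrite mulr0 in et0; exact: cvg_comp et0 cf.
Qed.

Lemma cvg_mul_div (x : R) : t * x / t @[t --> 0^'] --> x.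
Proof.
apply: cvg_trans (cvg_cst x : (fun=> x) @ 0^' --> x); apply: near_eq_cvg; near=> t.
have t0 : t != 0 by near: t; exact: nbhs_dnbhs_neq.
by rewrite mulrC mulKf.
Unshelve. all: by end_near. Qed.

End ScaledLimits.

Section CollocationContinuity.
Context {R : realType} {T : Type} {F : set_system T} {FF : Filter F}.

Lemma cvg_phi j (x y : T -> R) (x0 y0 : R) :
  x t @[t --> F] --> x0 -> y t @[t --> F] --> y0 ->
  phi R j (x t) (y t) @[t --> F] --> phi R j x0 y0.
Proof.
move=> xx0 yy0; case: j => [|[|[|[|[|j]]]]] /=; rewrite ?expr2; try exact: cvg_cst; try done;
  under eq_cvg do rewrite ?expr2; exact: cvgM.
Qed.

Lemma cvg_dphi a j (x y : T -> R) (x0 y0 : R) :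
  x t @[t --> F] --> x0 -> y t @[t --> F] --> y0 ->
  dphi R a j (x t) (y t) @[t --> F] --> dphi R a j x0 y0.
Proof.
move=> xx0 yy0; case: j => [|[|[|[|[|j]]]]] /=; case: (a == 0)%N;
  first [exact: cvg_cst | done | exact: cvgMl_tmp].
Qed.

Lemma cvg_coord a (p : T -> R * R) (P : R * R) :
  (p t).1 @[t --> F] --> P.1 -> (p t).2 @[t --> F] --> P.2 ->
  Defs.comp R a (p t) @[t --> F] --> Defs.comp R a P.
Proof. by rewrite /Defs.comp; case: (a == 0)%N. Qed.

Lemma cvg_mxE m n (f : T -> 'I_m -> 'I_n -> R) (l : 'I_m -> 'I_n -> R) :
  (forall i j, f x i j @[x --> F] --> l i j) ->
  forall i j, (\matrix_(i, j) f x i j) i j @[x --> F] --> (\matrix_(i, j) l i j) i j.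
Proof. by move=> fl i j; rewrite mxE; under eq_cvg do rewrite mxE; exact: fl. Qed.

(* The atoms of an entry, the rescaled coordinates [(q t k).1 / rad t] and the normal
   components, are closed by the hypotheses of [collocM_cvg]. *)
Ltac cvg_entry := repeat lazymatch goal with
  | |- cvg_to (nbhs (fmap (fun _ => _ + _) _)) _ => apply: cvgD
  | |- cvg_to (nbhs (fmap (fun _ => - _) _)) _ => apply: cvgN
  | |- cvg_to (nbhs (fmap (fun _ => phi _ _ _ _) _)) _ => apply: cvg_phi
  | |- cvg_to (nbhs (fmap (fun _ => dphi _ _ _ _ _) _)) _ => apply: cvg_dphi
  | |- cvg_to (nbhs (fmap (fun _ => Defs.comp _ _ _) _)) _ => apply: cvg_coord
  | |- cvg_to (nbhs (fmap (fun _ => _ / _) _)) _ => match goal with h : _ |- _ => exact: h end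
  | |- cvg_to (nbhs (fmap (fun _ => fst _) _)) _ => match goal with h : _ |- _ => exact: h end
  | |- cvg_to (nbhs (fmap (fun _ => snd _) _)) _ => match goal with h : _ |- _ => exact: h end
  | |- cvg_to (nbhs (fmap (fun _ => _ * _) _)) _ => apply: cvgM
  | |- _ => apply: cvg_cst
  end.

Lemma collocM_cvg (lam : R) (rad : T -> R) (q1 : T -> 'I_3 -> R * R) (q2 nv : T -> 'I_2 -> R * R)
  (q3 : T -> R * R) (q4 : T -> 'I_3 -> R * R) (Q1 : 'I_3 -> R * R) (Q2 NV : 'I_2 -> R * R)
  (Q3 : R * R) (Q4 : 'I_3 -> R * R) :
  (forall k, (q1 t k).1 / rad t @[t --> F] --> (Q1 k).1) ->
  (forall k, (q1 t k).2 / rad t @[t --> F] --> (Q1 k).2) ->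
  (forall k, (q2 t k).1 / rad t @[t --> F] --> (Q2 k).1) ->
  (forall k, (q2 t k).2 / rad t @[t --> F] --> (Q2 k).2) ->
  (forall k, (nv t k).1 @[t --> F] --> (NV k).1) ->
  (forall k, (nv t k).2 @[t --> F] --> (NV k).2) ->
  (q3 t).1 / rad t @[t --> F] --> Q3.1 ->
  (q3 t).2 / rad t @[t --> F] --> Q3.2 ->
  (forall k, (q4 t k).1 / rad t @[t --> F] --> (Q4 k).1) ->
  (forall k, (q4 t k).2 / rad t @[t --> F] --> (Q4 k).2) ->
  forall r u, collocM lam (rad t) (q1 t) (q2 t) (nv t) (q3 t) (q4 t) r u @[t --> F]
     --> collocM lam 1 Q1 Q2 NV Q3 Q4 r u.
Proof.
move=> *; apply: cvg_mxE => r u.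
cbv beta zeta; cbn [fst snd]; rewrite !divr1.
case: (u < 12)%N; (case: (r < 6)%N; [|case: (r < 10)%N; [|case: (r < 12)%N]]).
all: cvg_entry.
Qed.

End CollocationContinuity.

Lemma collocM_rescaled_cvg {R : realType} {X1 X2 n1 n2 : R -> R} (lam : R)
    (eta1 : 'I_3 -> R) (eta2 : 'I_2 -> R) (eta3 : R) (xi : 'I_3 -> R * R) :
  derivable X1 0 1 -> derivable X2 0 1 -> X1 0 = 0 -> X2 0 = 0 ->
  derive1 X1 0 = 1 -> derive1 X2 0 = 0 ->
  {for 0, continuous n1} -> {for 0, continuous n2} ->
  forall i j, collocM lam t (fun k => (X1 (eta1 k * t), X2 (eta1 k * t)))
    (fun k => (X1 (eta2 k * t), X2 (eta2 k * t))) (fun k => (n1 (eta2 k * t), n2 (eta2 k * t)))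
    (X1 (eta3 * t), X2 (eta3 * t)) (fun k => (t * (xi k).1, t * (xi k).2)) i j @[t --> 0^']
  --> collocM lam 1 (fun k => (eta1 k, 0)) (fun k => (eta2 k, 0)) (fun=> (n1 0, n2 0))
        (eta3, 0) xi i j.
Proof.
move=> dX1 dX2 X1_0 X2_0 dX1_0 dX2_0 n1_cont n2_cont.
apply: (@collocM_cvg _ _ _ _ lam id) => /= [k|k|k|k|k|k|||k|k].
- by have := cvg_comp_scale_div (eta1 k) dX1 X1_0; rewrite dX1_0 mulr1.
- by have := cvg_comp_scale_div (eta1 k) dX2 X2_0; rewrite dX2_0 mulr0.
- by have := cvg_comp_scale_div (eta2 k) dX1 X1_0; rewrite dX1_0 mulr1.
- by have := cvg_comp_scale_div (eta2 k) dX2 X2_0; rewrite dX2_0 mulr0.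
- exact: cvg_comp_scale n1_cont.
- exact: cvg_comp_scale n2_cont.
- by have := cvg_comp_scale_div eta3 dX1 X1_0; rewrite dX1_0 mulr1.
- by have := cvg_comp_scale_div eta3 dX2 X2_0; rewrite dX2_0 mulr0.
- exact: cvg_mul_div.
- exact: cvg_mul_div.
Qed.

Ltac limit_row h :=
  rewrite -[RHS]h /= !big_cons big_nil !mxE !inordK //= /divn /modn /Defs.comp /=; field.

Lemma collocM_limit_unitmx {R : realType} {lam : R} {e1 : 'I_3 -> R} {e2 : 'I_2 -> R}
    {e3 : R} {xi : 'I_3 -> R * R} {s : R} :
  injective e1 -> e2 ord0 != e2 (inord 1) ->
  ((xi (inord 1)).1 - (xi ord0).1) * ((xi (inord 2)).2 - (xi ord0).2)
    - ((xi (inord 1)).2 - (xi ord0).2) * ((xi (inord 2)).1 - (xi ord0).1) != 0 ->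
  s != 0 ->
  collocM lam 1 (fun k => (e1 k, 0)) (fun k => (e2 k, 0)) (fun=> (0, s)) (e3, 0) xi \in unitmx.
Proof.
move=> inj_e1 e2_neq xi_noncol s_neq0; apply: unitmx_of_ker0 => w ker.
have inord0 n : inord 0 = ord0 :> 'I_n.+1 by apply: val_inj; rewrite /= inordK.
rewrite -!inord0 in e2_neq xi_noncol.
have e1_neq i j : (i < j < 3)%N -> e1 (inord i) != e1 (inord j).
  case/andP=> ij j3; rewrite (inj_eq inj_e1) -(inj_eq val_inj) /=.
  by rewrite !inordK ?(ltn_trans ij) // ltn_eqF.
(* The indices of [w] are in [nat_scope]: in [ring_scope], [w 2] would denote
   [w 2%:R], a different atom for [ring]. *)
have dir0 : w 0%N + w 2%N * e1 (inord 0) + w 6%N * e1 (inord 0) ^+ 2 = 0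
  by limit_row (ker (inord 0)).
have dir1 : w 1%N + w 3%N * e1 (inord 0) + w 7%N * e1 (inord 0) ^+ 2 = 0
  by limit_row (ker (inord 1)).
have dir2 : w 0%N + w 2%N * e1 (inord 1) + w 6%N * e1 (inord 1) ^+ 2 = 0
  by limit_row (ker (inord 2)).
have dir3 : w 1%N + w 3%N * e1 (inord 1) + w 7%N * e1 (inord 1) ^+ 2 = 0
  by limit_row (ker (inord 3)).
have dir4 : w 0%N + w 2%N * e1 (inord 2) + w 6%N * e1 (inord 2) ^+ 2 = 0
  by limit_row (ker (inord 4)).
have dir5 : w 1%N + w 3%N * e1 (inord 2) + w 7%N * e1 (inord 2) ^+ 2 = 0
  by limit_row (ker (inord 5)).
have trac6 : s * w 3%N + s * w 4%N + 2 * s * e2 (inord 0) * w 7%N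
    + s * e2 (inord 0) * w 10%N = 0
  by limit_row (ker (inord 6)).
have trac7 : 2 * s * w 5%N + 2 * s * e2 (inord 0) * w 11%N - s * w 12%N
    - s * e2 (inord 0) * w 13%N = 0
  by limit_row (ker (inord 7)).
have trac8 : s * w 3%N + s * w 4%N + 2 * s * e2 (inord 1) * w 7%N
    + s * e2 (inord 1) * w 10%N = 0
  by limit_row (ker (inord 8)).
have trac9 : 2 * s * w 5%N + 2 * s * e2 (inord 1) * w 11%N - s * w 12%N
    - s * e2 (inord 1) * w 13%N = 0
  by limit_row (ker (inord 9)).
have brink10 : - lam * w 0%N - lam * e3 * w 2%N + (2 - lam * e3 ^+ 2) * w 6%N
    + 2 * w 8%N - w 13%N = 0
  by limit_row (ker (inord 10)).
have brink11 : - lam * w 1%N - lam * e3 * w 3%N + (2 - lam * e3 ^+ 2) * w 7%N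
    + 2 * w 9%N - w 14%N = 0
  by limit_row (ker (inord 11)).
have div12 : w 2%N + w 5%N + 2 * (xi (inord 0)).1 * w 6%N + 2 * (xi (inord 0)).2 * w 9%N
    + (xi (inord 0)).2 * w 10%N + (xi (inord 0)).1 * w 11%N = 0
  by limit_row (ker (inord 12)).
have div13 : w 2%N + w 5%N + 2 * (xi (inord 1)).1 * w 6%N + 2 * (xi (inord 1)).2 * w 9%N
    + (xi (inord 1)).2 * w 10%N + (xi (inord 1)).1 * w 11%N = 0
  by limit_row (ker (inord 13)).
have div14 : w 2%N + w 5%N + 2 * (xi (inord 2)).1 * w 6%N + 2 * (xi (inord 2)).2 * w 9%N
    + (xi (inord 2)).2 * w 10%N + (xi (inord 2)).1 * w 11%N = 0
  by limit_row (ker (inord 14)).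
have mul_eq0 (c x : R) : c != 0 -> c * x = 0 -> x = 0.
  by move=> c0 /eqP; rewrite mulf_eq0 (negbTE c0) => /eqP.
have two_neq0 : (2 : R) != 0 by rewrite pnatr_eq0.
have [e1_01 e1_02 e1_12] : [/\ e1 (inord 0) != e1 (inord 1), e1 (inord 0) != e1 (inord 2)
    & e1 (inord 1) != e1 (inord 2)] by split; apply: e1_neq.
have [w0 w2 w6] := quadratic_eq0_at3 e1_01 e1_02 e1_12 dir0 dir2 dir4.
have [w1 w3 w7] := quadratic_eq0_at3 e1_01 e1_02 e1_12 dir1 dir3 dir5.
have [w4 w10] : w 4%N = 0 /\ w 10%N = 0.
  have [] := @affine_eq0_at2 _ _ _ (s * w 4%N) (s * w 10%N) e2_neq.
  - by rewrite -[RHS]trac6 w3 w7; ring.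
  - by rewrite -[RHS]trac8 w3 w7; ring.
  by move=> /(mul_eq0 _ _ s_neq0) -> /(mul_eq0 _ _ s_neq0) ->.
have [w5 w11 w9] : [/\ w 5%N = 0, w 11%N = 0 & w 9%N = 0].
  have [] := @affine2_eq0_at3 _ _ _ _ _ _ _ (w 5%N) (w 11%N) (2 * w 9%N) xi_noncol.
  - by rewrite -[RHS]div12 w2 w6 w10; ring.
  - by rewrite -[RHS]div13 w2 w6 w10; ring.
  - by rewrite -[RHS]div14 w2 w6 w10; ring.
  by move=> -> -> /(mul_eq0 _ _ two_neq0) ->.
have [w12 w13] : w 12%N = 0 /\ w 13%N = 0.
  have [] := @affine_eq0_at2 _ _ _ (s * w 12%N) (s * w 13%N) e2_neq.
  - by rewrite -[RHS]oppr0 -[X in - X]trac7 w5 w11; ring.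
  - by rewrite -[RHS]oppr0 -[X in - X]trac9 w5 w11; ring.
  by move=> /(mul_eq0 _ _ s_neq0) -> /(mul_eq0 _ _ s_neq0) ->.
have w8 : w 8%N = 0.
  by apply: (mul_eq0 _ _ two_neq0); rewrite -[RHS]brink10 w0 w2 w6 w13; ring.
have w14 : w 14%N = 0 by rewrite -[RHS]oppr0 -[X in - X]brink11 w1 w3 w7 w9; ring.
by move=> k; do 15! case: k => [//|k].
Qed.

Theorem mainTheorem4 (R : realType) (a lam : R) (X1 X2 n1 n2 : R -> R)
    (eta1 : 'I_3 -> R) (eta2 : 'I_2 -> R) (eta3 : R) (xi : 'I_3 -> R * R) :
  (* Gamma: C^2 curve, arc-length parametrized by s in ]-a, a[ *)
  0 < a ->
  (forall s : R, -a < s < a ->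
     [/\ derivable X1 s 1, derivable X2 s 1,
         derivable (derive1 X1) s 1 & derivable (derive1 X2) s 1] /\
     {for s, continuous (derive1 (derive1 X1))} /\ {for s, continuous (derive1 (derive1 X2))}) ->
  (forall s : R, -a < s < a -> ((derive1 X1) s) ^+ 2 + ((derive1 X2) s) ^+ 2 = 1) ->
  X1 0 = 0 -> X2 0 = 0 -> (derive1 X1) 0 = 1 -> (derive1 X2) 0 = 0 ->
  (* unit normal field n(X(s)) = (n1 s, n2 s) *)
  (forall s : R, -a < s < a ->
     (n1 s) ^+ 2 + (n2 s) ^+ 2 = 1 /\ n1 s * (derive1 X1) s + n2 s * (derive1 X2) s = 0) ->
  {in `]-a, a[, continuous n1} -> {in `]-a, a[, continuous n2} ->
  0 <= lam ->
  (* collocation constants *)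
  injective eta1 ->
  eta2 ord0 != eta2 (inord 1) ->
  ((xi (inord 1)).1 - (xi ord0).1) * ((xi (inord 2)).2 - (xi ord0).2)
    - ((xi (inord 1)).2 - (xi ord0).2) * ((xi (inord 2)).1 - (xi ord0).1) != 0 ->
  (* all points lie in the disc O of radius R *)
  (forall k, `|eta1 k| <= 1) -> (forall k, `|eta2 k| <= 1) -> `|eta3| <= 1 ->
  (forall k, (xi k).1 ^+ 2 + (xi k).2 ^+ 2 <= 1) ->
  exists R0 : R, 0 < R0 /\ exists C : R,
    forall Rad : R, 0 < Rad <= R0 ->
      let X s := (X1 s, X2 s) in
      let M := collocM lam Rad
                 (fun k => X (eta1 k * Rad))
                 (fun k => X (eta2 k * Rad))
                 (fun k => (n1 (eta2 k * Rad), n2 (eta2 k * Rad)))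
                 (X (eta3 * Rad))
                 (fun k => (Rad * (xi k).1, Rad * (xi k).2)) in
      M \in unitmx /\ mxinfnorm (invmx M) <= C.
Proof.
move=> a_gt0 X_reg _ X1_0 X2_0 dX1_0 dX2_0 n_unit n1_cont n2_cont _ eta1_inj eta2_neq
  xi_noncol _ _ _ _.
have zero_in : -a < 0 < a by rewrite oppr_lt0 a_gt0.
have zero_itv : (0 : R) \in `]-a, a[ by rewrite in_itv.
have [[dX1 dX2 _ _] _] := X_reg 0 zero_in.
have [n_norm n_perp] := n_unit 0 zero_in.
have n1_0 : n1 0 = 0 by move: n_perp; rewrite dX1_0 dX2_0 mulr1 mulr0 addr0.
have n2_0 : n2 0 != 0.
  apply/eqP => n2_0; move: n_norm; rewrite n1_0 n2_0 expr0n /= add0r => /esym/eqP.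
  by rewrite oner_eq0.
have := collocM_rescaled_cvg lam eta1 eta2 eta3 xi dX1 dX2 X1_0 X2_0 dX1_0 dX2_0
  (n1_cont 0 zero_itv) (n2_cont 0 zero_itv).
rewrite n1_0 => cvg_entries.
have [C near_bounded] := cvg_unitmx_invmx_bounded cvg_entries
  (collocM_limit_unitmx eta1_inj eta2_neq xi_noncol n2_0).
have [R0 R0_gt0 bounded] := near_dnbhs0_pos near_bounded.
by exists R0; split => //; exists C => Rad /bounded.
Qed.
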